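(* For all integers $m,r\ge 0$ and $n\ge 1$, and all real $x\neq 0$, $$H_{m+r,n}(x)=m!\,r!\,n\,n!\sum_{k=0}^{m}\sum_{\nu=0}^{k}\sum_{j=0}^{\nu}\alpha_{j,\nu}\,\frac{\Gamma(n+k-\nu)}{(k-\nu)!\,\nu!}\,\frac{(-x)^{\nu}}{x^{n+k}}\,\frac{H_{m-k,n}(x)}{(m-k)!\,n!}\,\frac{H_{r-\nu+j,\,n-j}(x)}{(r-\nu+j)!\,(n-j)!},$$ where any term with $r-\nu+j<0$ or $n-j<0$ is interpreted as $0$.
   Context: For integers $m,n\ge 0$, the two-index Hermite polynomial is $H_{m,n}(x)=\left(-\frac{d}{dx}+2x\right)^m(x^n)$, i.e. the operator $f\mapsto -f'+2xf$ applied $m$ times to $x^n$; by convention $H_{m,n}=0$ whenever $m<0$ or $n<0$. The numbers $\alpha_{j,\nu}$ ($0\le j\le \nu$) are defined by $\alpha_{0,\nu}=2^\nu$, $\alpha_{\nu,\nu}=1$, and $\alpha_{j,\nu}=2\alpha_{j,\nu-1}+\alpha_{j-1,\nu-1}$ for $1\le j<\nu$. $\Gamma$ is the Euler Gamma function. *)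

From HB Require Import structures.
From mathcomp Require Import all_boot all_order all_algebra.
Set Implicit Arguments. Unset Strict Implicit. Unset Printing Implicit Defensive.
Import Order.TTheory GRing.Theory Num.Theory.
Local Open Scope ring_scope.

Definition hermOp (R : realFieldType) (p : {poly R}) : {poly R} :=
  - p^`() + ('X * p) *+ 2.

Definition H2 (R : realFieldType) (m n : nat) : {poly R} :=
  iter m (@hermOp R) 'X^n.

(* alpha_{j,nu}: alpha_{0,nu} = 2^nu, alpha_{nu,nu} = 1,
   alpha_{j,nu} = 2 alpha_{j,nu-1} + alpha_{j-1,nu-1} for 1 <= j < nu.
   (Values for j > nu are irrelevant and never used.) *)
Fixpoint alpha (j nu : nat) : nat :=
  match nu with
  | 0 => 1
  | nu'.+1 =>
      match j with
      | 0 => 2 ^ nu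
      | j'.+1 => if j == nu then 1 else 2 * alpha j nu' + alpha j' nu'
      end
  end%N.

(* Euler Gamma at positive integers: Gamma(s) = (s-1)!  (only used at s >= 1). *)
Definition GammaN (s : nat) : nat := (s.-1)`!.

From HB Require Import structures.
From mathcomp Require Import all_boot all_order all_algebra.
From mathcomp Require Import ring zify.
Set Implicit Arguments. Unset Strict Implicit. Unset Printing Implicit Defensive.
Import Order.TTheory GRing.Theory Num.Theory.
Local Open Scope ring_scope.

(* Write A = -D + 2X for the raising operator, so that H_{m,n} = A^m (X^n) and
   H_{m+r,n} = A^m H_{r,n}.  The proof has three independent parts.

   Conjugating by powers of X turns A into
      X^(c+1) A q = S_c (X^c q) with S_c = (c - X D) + 2X^2, and the weighted
      Euler operator theta_c = c - X D obeys a Leibniz rule.  Induction on m,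
      driven by Pascal's rule, gives for every polynomial p
        X^(n+m) A^m p = sum_k C(m,k) X^(m-k) H_{m-k,n} E_k(p),
        E_k(p) = sum_nu C(k,nu) (n)_(k-nu) (-X)^nu D^nu p,
      where (n)_i is the rising factorial.
   2. Derivatives.  D H_{r,n} = 2r H_{r-1,n} + n H_{r,n-1}; for the normalised
      h_{a,b} = H_{a,b}/(a! b!) this reads D h_{a,b} = 2 h_{a-1,b} + h_{a,b-1},
      so D^nu h_{r,n} = sum_j C(nu,j) 2^(nu-j) h_{r-nu+j,n-j}, and
      alpha_{j,nu} = C(nu,j) 2^(nu-j).
   3. Bookkeeping.  With p = H_{r,n}, evaluate at x <> 0 and match the scalar
      factors termwise using m! = C(m,k) k! (m-k)!, k! = C(k,nu) nu! (k-nu)!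
      and (n)_i (n-1)! = Gamma(n+i). *)

(* Pascal's rule in summed form: the sum for k+1 splits into two sums for k.
   It drives all three inductions of the development. *)
Lemma binomial_recursion_sum (V : nmodType) (F : nat -> nat -> V) k :
  \sum_(i < k.+2) F i (k.+1 - i)%N *+ 'C(k.+1, i) =
  \sum_(i < k.+1) (F i.+1 (k - i)%N + F i (k - i).+1) *+ 'C(k, i).
Proof.
under [RHS]eq_bigr do rewrite mulrnDl.
rewrite big_ord_recl big_split /= [X in _ = _ + X]big_ord_recl /=.
under eq_bigr do rewrite /bump /= add1n binS mulrnDr subSS.
rewrite big_split /= big_ord_recr /= (bin_small (ltnSn k)) mulr0n addr0.
under [X in _ = _ + (_ + X)]eq_bigr => i _ do
  rewrite /bump /= add1n subnSK ?ltn_ord //.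
by rewrite !bin0 !subn0 [in RHS]addrC -addrA.
Qed.

(* The coefficients alpha_{j,nu} are C(nu,j) 2^(nu-j): they satisfy the same
   recursion and boundary values. *)
Lemma alpha_binomial j nu :
  (j <= nu)%N -> alpha j nu = (2 ^ (nu - j) * 'C(nu, j))%N.
Proof.
elim: nu j => [|nu IH] [|j] //= le_j_nu.
  by rewrite bin0 subn0 muln1.
case: eqP => [->|/eqP ne_j_nu]; first by rewrite subnn binn.
have lt_j_nu : (j < nu)%N by rewrite ltn_neqAle ne_j_nu -ltnS.
by rewrite !IH ?(ltnW lt_j_nu) // binS subSS mulnDr mulnA -expnS subnSK.
Qed.

Definition poch (n i : nat) : nat := \prod_(l < i) (n + l)%N.

Lemma pochS n i : poch n i.+1 = (poch n i * (n + i))%N.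
Proof. by rewrite /poch big_ord_recr. Qed.

Lemma poch_GammaN n i : (0 < n)%N -> (poch n i * GammaN n)%N = GammaN (n + i).
Proof.
case: n => // n _; elim: i => [|i IH]; first by rewrite /poch big_ord0 mul1n addn0.
by rewrite pochS mulnAC IH addnS /GammaN /= factS mulnC.
Qed.

Lemma fact_natr_neq0 (R : numDomainType) a : ((a`!)%:R : R) != 0.
Proof. by rewrite pnatr_eq0 -lt0n fact_gt0. Qed.

Lemma inv_factS_natr (R : numFieldType) a c :
  (((a.+1)`! * c)%:R)^-1 * (a.+1)%:R = ((a`! * c)%:R)^-1 :> R.
Proof.
rewrite factS -mulnA natrM invfM mulrC mulrA mulfV ?mul1r //.
by rewrite pnatr_eq0.
Qed.

Section EulerOperator.
Variable R : comNzRingType.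
Implicit Types (f g p : {poly R}) (a b c i k n : nat).

Definition eulerOp c p : {poly R} := - ('X * p^`()) + p *+ c.

Lemma eulerOp_is_zmod_morphism c : zmod_morphism (eulerOp c).
Proof. by move=> p q; rewrite /eulerOp derivB; ring. Qed.

HB.instance Definition _ c :=
  GRing.isZmodMorphism.Build {poly R} {poly R} (eulerOp c)
    (eulerOp_is_zmod_morphism c).

Lemma eulerOpM a b f g :
  eulerOp (a + b) (f * g) = eulerOp a f * g + f * eulerOp b g.
Proof. by rewrite /eulerOp derivM; ring. Qed.

Lemma eulerOp_monomial c : eulerOp c ((- 'X) ^+ c) = 0.
Proof.
rewrite /eulerOp deriv_exp derivN derivX.
by case: c => [|c]; rewrite ?expr0 ?exprS /=; ring.
Qed.

Definition taylorTerm p i : {poly R} := (- 'X) ^+ i * p^`(i).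

Lemma eulerOp_taylorTerm a i p :
  eulerOp (i + a) (taylorTerm p i) = taylorTerm p i.+1 + taylorTerm p i *+ a.
Proof.
rewrite /taylorTerm eulerOpM eulerOp_monomial /eulerOp derivnS exprS; ring.
Qed.

(* E_k(p) = theta_(n+k-1) ... theta_(n+1) theta_n p, in closed form. *)
Definition eulerPow n k p : {poly R} :=
  \sum_(i < k.+1) taylorTerm p i *+ poch n (k - i) *+ 'C(k, i).

Lemma eulerPowS n k p : eulerPow n k.+1 p = eulerOp (n + k) (eulerPow n k p).
Proof.
rewrite /eulerPow (binomial_recursion_sum (fun i j => taylorTerm p i *+ poch n j)).
rewrite raddf_sum; apply: eq_bigr => i _.
have -> : (n + k = i + (n + (k - i)))%N by have := ltn_ord i; lia.
rewrite !raddfMn /= eulerOp_taylorTerm.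
by rewrite pochS [(poch n _ * _)%N]mulnC mulrnA !mulrnDl.
Qed.

Definition hermConj c p : {poly R} := eulerOp c p + ('X^2 * p) *+ 2.

Lemma hermConj_is_zmod_morphism c : zmod_morphism (hermConj c).
Proof. by move=> p q; rewrite /hermConj raddfB; ring. Qed.

HB.instance Definition _ c :=
  GRing.isZmodMorphism.Build {poly R} {poly R} (hermConj c)
    (hermConj_is_zmod_morphism c).

Lemma hermConjM a b f g :
  hermConj (a + b) (f * g) = hermConj a f * g + f * eulerOp b g.
Proof. by rewrite /hermConj eulerOpM; ring. Qed.

End EulerOperator.

Section Hermite.
Variable R : realFieldType.
Implicit Types (p q : {poly R}) (a b c j k m n nu r : nat).

Local Arguments H2 : simpl never.

Lemma hermOp_is_zmod_morphism : zmod_morphism (@hermOp R).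
Proof. by move=> p q; rewrite /hermOp derivB; ring. Qed.

HB.instance Definition _ :=
  GRing.isZmodMorphism.Build {poly R} {poly R} (@hermOp R)
    hermOp_is_zmod_morphism.

Lemma H2S m n : H2 R m.+1 n = hermOp (H2 R m n).
Proof. by rewrite /H2 iterS. Qed.

Lemma H2D m r n : H2 R (m + r) n = iter m (@hermOp R) (H2 R r n).
Proof. by rewrite /H2 iterD. Qed.

Lemma X_hermOp c q : 'X^(c.+1) * hermOp q = hermConj c ('X^c * q).
Proof.
rewrite /hermConj /eulerOp /hermOp derivM derivXn.
by case: c => [|c]; rewrite ?exprS ?expr0 /=; ring.
Qed.

Definition xherm n j : {poly R} := 'X^j * H2 R j n.

Lemma xhermS n j : xherm n j.+1 = hermConj j (xherm n j).
Proof. by rewrite /xherm H2S X_hermOp. Qed.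

Lemma hermite_iter_expansion n m p :
  'X^(n + m) * iter m (@hermOp R) p =
  \sum_(k < m.+1) (xherm n (m - k) * eulerPow n k p) *+ 'C(m, k).
Proof.
elim: m => [|m IH].
  rewrite big_ord1 /xherm /eulerPow big_ord1 /= /H2 /=.
  by rewrite addn0 expr0 mul1r mulr1n /poch big_ord0 /taylorTerm expr0 mul1r.
rewrite iterS addnS X_hermOp IH raddf_sum.
rewrite (binomial_recursion_sum (fun i j => xherm n j * eulerPow n i p)).
apply: eq_bigr => i _; rewrite raddfMn /=.
have -> : (n + m = (m - i) + (n + i))%N by have := ltn_ord i; lia.
by rewrite hermConjM -xhermS -eulerPowS addrC.
Qed.

Lemma hermite_iter_eval n m p (x : R) : x != 0 ->
  (iter m (@hermOp R) p).[x] = \sum_(k < m.+1) \sum_(nu < k.+1)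
    (x ^+ (n + m))^-1 * x ^+ (m - k) * ('C(m, k) * 'C(k, nu) * poch n (k - nu))%:R
    * (p^`(nu)).[x] * ((- x) ^+ nu * (H2 R (m - k) n).[x]).
Proof.
move=> x_neq0.
have /(congr1 (horner^~ x)) := hermite_iter_expansion n m p.
rewrite hornerM hornerXn => /(canRL (mulKf (expf_neq0 _ x_neq0))) ->.
rewrite horner_sum mulr_sumr; apply: eq_bigr => k _.
rewrite hornerMn hornerM /xherm hornerM hornerXn /eulerPow horner_sum.
rewrite -mulr_natr !(mulr_sumr, mulr_suml); apply: eq_bigr => nu _.
rewrite !hornerMn /taylorTerm hornerM horner_exp hornerN hornerX; ring.
Qed.

Lemma deriv_hermOp q : (hermOp q)^`() = hermOp q^`() + q *+ 2.
Proof. by rewrite /hermOp !derivE; ring. Qed.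

Lemma deriv_H2 r n :
  (H2 R r n)^`() = H2 R r.-1 n *+ (2 * r) + H2 R r n.-1 *+ n.
Proof.
elim: r => [|r IH]; first by rewrite /H2 /= derivXn muln0 mulr0n add0r.
rewrite H2S deriv_hermOp IH raddfD !raddfMn /= -!H2S.
by case: r {IH} => [|r] /=; rewrite -?H2S; ring.
Qed.

Definition hermN a b : {poly R} := ((a`! * b`!)%:R)^-1 *: H2 R a b.

Lemma H2_hermN r n : H2 R r n = (r`! * n`!)%:R *: hermN r n.
Proof.
by rewrite /hermN scalerA mulfV ?scale1r // natrM mulf_neq0 ?fact_natr_neq0.
Qed.

Lemma deriv_hermN a b :
  (hermN a b)^`() = (if a is a'.+1 then hermN a' b else 0) *+ 2
                    + (if b is b'.+1 then hermN a b' else 0).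
Proof.
rewrite /hermN derivZ deriv_H2 scalerDr; congr (_ + _).
  case: a => [|a] /=; first by rewrite muln0 mulr0n scaler0 mul0rn.
  by rewrite -!scaler_nat !scalerA (natrM _ 2) mulrCA inv_factS_natr mulrC.
case: b => [|b] /=; first by rewrite mulr0n scaler0.
by rewrite -scaler_nat scalerA [(a`! * _)%N]mulnC inv_factS_natr mulnC.
Qed.

(* h_{r-nu+j, n-j}, taken to be 0 when an index is negative: the terms of
   D^nu h_{r,n}, and exactly the convention of the product formula. *)
Definition hermShift r n nu j : {poly R} :=
  if (r + j < nu)%N || (n < j)%N then 0 else hermN (r + j - nu) (n - j).

Lemma deriv_hermShift r n nu j :
  (hermShift r n nu j)^`() = hermShift r n nu.+1 j *+ 2 + hermShift r n nu.+1 j.+1.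
Proof.
rewrite /hermShift; case: ifP => out_of_range.
  have -> : ((r + j < nu.+1)%N || (n < j)%N) = true by move: out_of_range; lia.
  have -> : ((r + j.+1 < nu.+1)%N || (n < j.+1)%N) = true by move: out_of_range; lia.
  by rewrite deriv0 mul0rn addr0.
have -> : ((r + j < nu.+1)%N || (n < j)%N) = (r + j - nu == 0)%N.
  by move: out_of_range; lia.
have -> : ((r + j.+1 < nu.+1)%N || (n < j.+1)%N) = (n - j == 0)%N.
  by move: out_of_range; lia.
rewrite deriv_hermN addnS subSS !subnS.
by case: (r + j - nu)%N => [|a]; case: (n - j)%N.
Qed.

Lemma derivn_hermN r n nu :
  (hermN r n)^`(nu) =
  \sum_(j < nu.+1) hermShift r n nu j *+ 2 ^ (nu - j) *+ 'C(nu, j).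
Proof.
elim: nu => [|nu IH].
  by rewrite derivn0 big_ord1 /hermShift /= addn0 !subn0 expn0.
rewrite (binomial_recursion_sum (fun j e => hermShift r n nu.+1 j *+ 2 ^ e)).
rewrite derivnS IH raddf_sum; apply: eq_bigr => j _.
by rewrite !raddfMn /= deriv_hermShift expnS; ring.
Qed.

Lemma derivn_H2_eval r n nu (x : R) :
  ((H2 R r n)^`(nu)).[x] =
  (r`! * n`!)%:R * \sum_(j < nu.+1) (alpha j nu)%:R * (hermShift r n nu j).[x].
Proof.
rewrite H2_hermN derivnZ hornerZ derivn_hermN horner_sum; congr (_ * _).
apply: eq_bigr => j _.
by rewrite !hornerMn alpha_binomial -1?ltnS // mulr_natl mulrnA.
Qed.

Lemma hermShift_eval r n nu j (x : R) :
  (hermShift r n nu j).[x] =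
  if (r + j < nu)%N || (n < j)%N then 0 else
    (H2 R (r + j - nu) (n - j)).[x] / ((r + j - nu)`! * (n - j)`!)%:R.
Proof. by rewrite /hermShift; case: ifP; rewrite ?horner0 // hornerZ mulrC. Qed.

End Hermite.

Lemma expansion_coef (R : numFieldType) m r n k nu (x : R) :
  (0 < n)%N -> (nu <= k <= m)%N -> x != 0 ->
  (x ^+ (n + m))^-1 * x ^+ (m - k) * ('C(m, k) * 'C(k, nu) * poch n (k - nu))%:R
    * (r`! * n`!)%:R =
  (m`!)%:R * (r`!)%:R * n%:R * (n`!)%:R
    * ((GammaN (n + k - nu))%:R / ((k - nu)`! * nu`!)%:R)
    / x ^+ (n + k) / ((m - k)`! * n`!)%:R.
Proof.
move=> n_gt0 /andP[le_nu_k le_k_m] x_neq0.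
have count : ('C(m, k) * 'C(k, nu) * poch n (k - nu)
              * ((k - nu)`! * nu`! * (m - k)`! * GammaN n)
              = m`! * GammaN (n + k - nu))%N.
  rewrite -(bin_fact le_k_m) -(bin_fact le_nu_k) -addnBA // -poch_GammaN //.
  ring.
have x_pow : x ^+ (n + m) = x ^+ (n + k) * x ^+ (m - k).
  by rewrite -exprD; congr (_ ^+ _); lia.
have n_fact : n`! = (n * GammaN n)%N.
  by rewrite /GammaN -{1}(prednK n_gt0) factS prednK.
have binom_eq : (('C(m, k) * 'C(k, nu) * poch n (k - nu))%:R : R) =
   (m`! * GammaN (n + k - nu))%:R / ((k - nu)`! * nu`! * (m - k)`! * GammaN n)%:R.
  by rewrite -count [in RHS]natrM mulfK // !natrM !mulf_neq0 ?fact_natr_neq0.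
rewrite x_pow binom_eq n_fact !natrM; field.
by rewrite !fact_natr_neq0 ?expf_neq0 // pnatr_eq0 -lt0n n_gt0.
Qed.

Theorem mainTheorem17 (R : realFieldType) (m r n : nat) (x : R) :
  (1 <= n)%N -> x != 0 ->
  (H2 R (m + r) n).[x] =
  (m`!)%:R * (r`!)%:R * n%:R * (n`!)%:R *
  \sum_(k < m.+1) \sum_(nu < k.+1) \sum_(j < nu.+1)
     (if ((r + j < nu)%N || (n < j)%N) then 0 else
      (alpha j nu)%:R
      * ((GammaN (n + k - nu))%:R / ((k - nu)`! * nu`!)%:R)
      * ((- x) ^+ nu / x ^+ (n + k))
      * ((H2 R (m - k) n).[x] / ((m - k)`! * n`!)%:R)
      * ((H2 R (r + j - nu) (n - j)).[x] / ((r + j - nu)`! * (n - j)`!)%:R)).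
Proof.
move=> n_gt0 x_neq0.
rewrite H2D (hermite_iter_eval n _ _ x_neq0) mulr_sumr.
apply: eq_bigr => -[k lt_k_m] _ /=; rewrite mulr_sumr.
apply: eq_bigr => -[nu lt_nu_k] _ /=.
have le_nu_k_m : (nu <= k <= m)%N by apply/andP; split; rewrite -ltnS.
rewrite derivn_H2_eval [_ * (_%:R * \sum_(_ < _) _)]mulrA.
rewrite expansion_coef // !(mulr_sumr, mulr_suml).
apply: eq_bigr => j _; rewrite hermShift_eval.
by case: ifP => _; ring.
Qed.
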